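(* Let $L_0$ be a set of locations shared between frames $\mathcal{F}_1$ and $\mathcal{F}_2$, with $\mathrm{LEFT}_0$, $C_{cut,0}$, $\mathrm{RIGHT}_2$ as defined below, and assume $\mathrm{lruns}_{C_{cut,0}}(\mathcal{F}_2)\subseteq\mathrm{lruns}_{C_{cut,0}}(\mathcal{F}_1)$. Let $C_s\subseteq\mathrm{LEFT}_0$, $C_o\subseteq\mathrm{RIGHT}_2$, and let $f$ be a function on sets of $C_s$-runs. If $\mathcal{F}_1$ $f$-limits $C_s$-to-$C_{cut,0}$ flow, then $\mathcal{F}_2$ $f$-limits $C_s$-to-$C_o$ flow.
   Context: A frame $\mathcal{F}$ consists of pairwise disjoint sets of locations $\mathcal{LO}$, channels $\mathcal{CH}$, data values $\mathcal{D}$. Each channel $c$ either has both a sender location $\mathrm{sender}(c)$ and a recipient location $\mathrm{recipient}(c)$ (possibly equal), or neither; the endpoint set $\mathrm{ends}(\ell)$ of a location records which channels it sends/receives on, and $\mathrm{chans}(\ell)=\{c:\mathrm{sender}(c)=\ell\text{ or }\mathrm{recipient}(c)=\ell\}$. Each location $\ell$ has a prefix-closed set $\mathrm{traces}(\ell)$ of finite or infinite sequences of labels $(c,v)$, $c\in\mathrm{chans}(\ell)$, $v\in\mathcal{D}$. Events are drawn from a common set $E$ with functions $\mathrm{chan}$ (to channels) and $\mathrm{msg}$ (to data). A system of events is $(B,\preceq)$, $B\subseteq E$, $\preceq$ a partial order with finitely many predecessors for each event; it is an execution of $\mathcal{F}$ ($\in\mathrm{exec}(\mathcal{F})$) iff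 for each location $\ell$ the events whose channel has $\ell$ as sender or recipient are linearly ordered and, as the sequence of labels $(\mathrm{chan}(e),\mathrm{msg}(e))$, form a member of $\mathrm{traces}(\ell)$. For $C$ a set of channels, $\mathcal{B}|_C$ keeps the events with channel in $C$ and the restricted order. $\mathrm{lruns}_C(\mathcal{F})$ is the set of $\mathcal{A}|_C$ for $\mathcal{A}\in\mathrm{exec}(\mathcal{F})$ ($C$-runs). $J_{C}^{C'}(\mathcal{B})$ computed in frame $\mathcal{F}_i$ is $\{\mathcal{A}|_{C'}:\mathcal{A}\in\mathrm{exec}(\mathcal{F}_i),\ \mathcal{A}|_C=\mathcal{B}\}$. A set $L_0$ is shared between $\mathcal{F}_1,\mathcal{F}_2$ (with locations $\mathcal{LO}_i$, channels $\mathcal{CH}_i$) iff $L_0\subseteq\mathcal{LO}_1\cap\mathcal{LO}_2$ and every $\ell\in L_0$ has the same channel endpoints and the same trace set in both frames. Then $\mathrm{LEFT}_0=\{c\in\mathcal{CH}_1:$ both endpoints of $c$ lie in $L_0\}$, $C_{cut,0}=\{c\in\mathcal{CH}_1:$ exactly one endpoint of $c$ lies in $L_0\}$, $\mathrm{RIGHT}_i=\{c\in\mathcal{CH}_i:$ neither endpoint lies in $L_0\}$. A blur operator is a function $f$ on sets with $S\subseteq f(S)$, $f(f(S))=f(S)$, and $f(\bigcup_{a\in I}S_a)=\bigcup_{a\in I}f(S_a)$ for all families; $S$ is $f$-blurred iff $f$ is a blur operator and $f(S)=S$. Frame $\mathcal{F}_i$ $f$-limits $C$-to-$C'$ flow iff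 $f$ is a blur operator and for every $C'$-run $\mathcal{B}$ of $\mathcal{F}_i$, $J_{C'}^{C}(\mathcal{B})$ (computed in $\mathcal{F}_i$) is $f$-blurred. *)

From Stdlib Require Import List.
Set Implicit Arguments.
Unset Strict Implicit.

Definition subset {X : Type} (S T : X -> Prop) : Prop := forall x, S x -> T x.

Section Frames.
Variables (Loc Chan Data : Type).

(* A (finite or infinite) sequence of labels: positions 0,1,2,...; once a
   position is undefined (None), all later ones are too. *)
Definition label := (Chan * Data)%type.
Definition is_seq {X : Type} (s : nat -> option X) : Prop :=
  forall n, s n = None -> s (S n) = None.
Definition trunc {X : Type} (k : nat) (s : nat -> option X) : nat -> option X :=
  fun n => if Nat.ltb n k then s n else None.

Record frame := Frame {
  LO : Loc -> Prop;
  CH : Chan -> Prop;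
  sender : Chan -> option Loc;
  recipient : Chan -> option Loc;
  traces : Loc -> (nat -> option label) -> Prop }.

Definition chans (F : frame) (l : Loc) (c : Chan) : Prop :=
  sender F c = Some l \/ recipient F c = Some l.

Definition wf_frame (F : frame) : Prop :=
  (forall c, sender F c = None <-> recipient F c = None) /\
  (forall c l, sender F c = Some l -> CH F c /\ LO F l) /\
  (forall c l, recipient F c = Some l -> CH F c /\ LO F l) /\
  (forall l t, traces F l t ->
     is_seq t /\ forall n c v, t n = Some (c, v) -> chans F l c) /\
  (forall l t k, traces F l t -> traces F l (trunc k t)).

Variables (E : Type) (chan : E -> Chan) (msg : E -> Data).

(* A system of events (B, ⪯): B ⊆ E, le a partial order on B. *)
Record system := System { ev : E -> Prop; le : E -> E -> Prop }.

Definition is_system (A : system) : Prop :=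
  (forall x y, le A x y -> ev A x /\ ev A y) /\
  (forall x, ev A x -> le A x x) /\
  (forall x y, le A x y -> le A y x -> x = y) /\
  (forall x y z, le A x y -> le A y z -> le A x z) /\
  (forall y, ev A y -> exists l : list E, forall x, le A x y -> In x l).

Definition restrict (C : Chan -> Prop) (A : system) : system :=
  System (fun e => ev A e /\ C (chan e))
         (fun x y => le A x y /\ C (chan x) /\ C (chan y)).

Definition loc_ok (F : frame) (A : system) (l : Loc) : Prop :=
  let Ev := fun e => ev A e /\ chans F l (chan e) in
  (forall e1 e2, Ev e1 -> Ev e2 -> le A e1 e2 \/ le A e2 e1) /\
  exists (t : nat -> option label) (s : nat -> option E),
    traces F l t /\
    (forall n, t n = option_map (fun e => (chan e, msg e)) (s n)) /\
    (forall n e, s n = Some e -> Ev e) /\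
    (forall i j ei ej, i < j -> s i = Some ei -> s j = Some ej ->
        le A ei ej /\ ei <> ej) /\
    (forall e, Ev e -> exists n, s n = Some e).

Definition exec (F : frame) (A : system) : Prop :=
  is_system A /\
  (forall e, ev A e -> CH F (chan e)) /\
  (forall l, LO F l -> loc_ok F A l).

Definition lruns (C : Chan -> Prop) (F : frame) : system -> Prop :=
  fun B => exists A, exec F A /\ restrict C A = B.

Definition J (F : frame) (C C' : Chan -> Prop) (B : system) : system -> Prop :=
  fun X => exists A, exec F A /\ restrict C A = B /\ restrict C' A = X.

Definition shared (L0 : Loc -> Prop) (F1 F2 : frame) : Prop :=
  (forall l, L0 l -> LO F1 l /\ LO F2 l) /\
  (forall l, L0 l ->
     (forall c, sender F1 c = Some l <-> sender F2 c = Some l) /\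
     (forall c, recipient F1 c = Some l <-> recipient F2 c = Some l) /\
     traces F1 l = traces F2 l).

Definition endpoint_in (L0 : Loc -> Prop) (o : option Loc) : Prop :=
  exists l, o = Some l /\ L0 l.

Definition LEFT (L0 : Loc -> Prop) (F1 : frame) (c : Chan) : Prop :=
  CH F1 c /\ endpoint_in L0 (sender F1 c) /\ endpoint_in L0 (recipient F1 c).

Definition Ccut (L0 : Loc -> Prop) (F1 : frame) (c : Chan) : Prop :=
  CH F1 c /\ (exists s r, sender F1 c = Some s /\ recipient F1 c = Some r) /\
  ((endpoint_in L0 (sender F1 c) /\ ~ endpoint_in L0 (recipient F1 c)) \/
   (~ endpoint_in L0 (sender F1 c) /\ endpoint_in L0 (recipient F1 c))).

Definition RIGHT (L0 : Loc -> Prop) (Fi : frame) (c : Chan) : Prop :=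
  CH Fi c /\ ~ endpoint_in L0 (sender Fi c) /\ ~ endpoint_in L0 (recipient Fi c).

Definition bigunion {X I : Type} (S : I -> X -> Prop) : X -> Prop :=
  fun x => exists a, S a x.

Definition blur_operator (f : (system -> Prop) -> (system -> Prop)) : Prop :=
  (forall S, subset S (f S)) /\
  (forall S, f (f S) = f S) /\
  (forall (I : Type) (S : I -> system -> Prop),
      f (bigunion S) = bigunion (fun a => f (S a))).

Definition blurred (f : (system -> Prop) -> (system -> Prop)) (S : system -> Prop) : Prop :=
  blur_operator f /\ f S = S.

Definition limits (F : frame) (f : (system -> Prop) -> (system -> Prop))
    (C C' : Chan -> Prop) : Prop :=
  blur_operator f /\
  forall B, lruns C' F B -> blurred f (J F C' C B).

End Frames.

(* Split an execution along the cut channels: events on channels with an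
   endpoint in [L0] are governed by the locations of [L0], the others by the
   remaining locations, and the two groups share exactly the cut channels.  So
   two executions (of frames sharing [L0]) that agree on the cut can be glued
   into one taking the [L0] side from the first and the rest from the second;
   the union of their orders is again a partial order with finite predecessor
   sets.  Consequently, for a [Co]-run [B] of [F2], the set [J_Co^Cs(B)] is
   the union over the [F2]-executions [A] with [A|Co = B] of the sets
   [J_Ccut^Cs(A|Ccut)] computed in [F1].  Each [A|Ccut] is a [Ccut]-run of
   [F1], so each member of the union is [f]-blurred, and a blur operator
   commutes with unions. *)

From Stdlib Require Import List Classical FunctionalExtensionality PropExtensionality.

Lemma finite_preds_list {E : Type} (R : E -> E -> Prop) (l : list E) :
  (forall y, exists ly, forall x, R x y -> In x ly) ->
  exists lp, forall y x, In y l -> R x y -> In x lp.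
Proof.
  intros hfin. induction l as [|a l [lp hlp]].
  - exists nil. intros y x [].
  - destruct (hfin a) as [la hla]. exists (la ++ lp).
    intros y x [<-|hy] hxy; apply in_or_app; eauto.
Qed.

Lemma system_preds_finite {E : Type} (A : system E) :
  is_system A -> forall y, exists ly, forall x, le A x y -> In x ly.
Proof.
  intros [hev [_ [_ [_ hfin]]]] y.
  destruct (classic (ev A y)) as [hy|hy]; [exact (hfin y hy)|].
  exists nil. intros x hxy. exact (hy (proj2 (hev x y hxy))).
Qed.

Definition le_within {E : Type} (A : system E) (P : E -> Prop) (a b : E) : Prop :=
  le A a b /\ P a /\ P b.

Lemma le_within_trans {E : Type} (A : system E) (P : E -> Prop) :
  is_system A -> forall a b c,
  le_within A P a b -> le_within A P b c -> le_within A P a c.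
Proof.
  intros [_ [_ [_ [htrans _]]]] a b c [hab [ha _]] [hbc [_ hc]].
  split; [eapply htrans; eauto|auto].
Qed.

(* [glue_le] is already transitive: inner points of a longer chain of [X]- and
   [Y]-steps lie in [L /\ N], where the two orders agree, so the chain
   collapses to at most two steps. *)
Section GlueOrders.
Context {E : Type} (X Y : system E) (L N : E -> Prop).

Definition glue_le (a b : E) : Prop :=
  le_within X L a b \/ le_within Y N a b \/
  (exists c, le_within X L a c /\ le_within Y N c b) \/
  (exists c, le_within Y N a c /\ le_within X L c b).

Definition glue : system E :=
  System (fun e => ev X e /\ L e \/ ev Y e /\ N e) glue_le.

Hypotheses (sysX : is_system X) (sysY : is_system Y).
Hypothesis L_or_N : forall e, L e \/ N e.
Hypothesis ev_agree : forall e, L e -> N e -> (ev X e <-> ev Y e).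
Hypothesis le_agree : forall x y, L x -> N x -> L y -> N y -> (le X x y <-> le Y x y).

Lemma le_within_YX (a b : E) : le_within Y N a b -> L a -> L b -> le_within X L a b.
Proof. intros [h [ha hb]] la lb. repeat split; auto. apply le_agree; auto. Qed.

Lemma le_within_XY (a b : E) : le_within X L a b -> N a -> N b -> le_within Y N a b.
Proof. intros [h [la lb]] ha hb. repeat split; auto. apply le_agree; auto. Qed.

Lemma le_within_XYX (a b c d : E) :
  le_within X L a b -> le_within Y N b c -> le_within X L c d -> le_within X L a d.
Proof.
  intros hab hbc hcd. apply (le_within_trans X L sysX _ c); auto.
  apply (le_within_trans X L sysX _ b); auto.
  apply le_within_YX; [exact hbc|apply hab|apply hcd].
Qed.

Lemma le_within_YXY (a b c d : E) :
  le_within Y N a b -> le_within X L b c -> le_within Y N c d -> le_within Y N a d.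
Proof.
  intros hab hbc hcd. apply (le_within_trans Y N sysY _ c); auto.
  apply (le_within_trans Y N sysY _ b); auto.
  apply le_within_XY; [exact hbc|apply hab|apply hcd].
Qed.

Lemma glue_le_trans (a b c : E) : glue_le a b -> glue_le b c -> glue_le a c.
Proof.
  pose proof (le_within_trans X L sysX). pose proof (le_within_trans Y N sysY).
  pose proof le_within_XYX. pose proof le_within_YXY.
  intros [h1|[h1|[[m1 [h1 h1']]|[m1 [h1 h1']]]]]
         [h2|[h2|[[m2 [h2 h2']]|[m2 [h2 h2']]]]];
  unfold glue_le;
  first [ left; solve [eauto 4]
        | right; left; solve [eauto 4]
        | right; right; left; solve [ exists m1; split; eauto 4
                                    | exists m2; split; eauto 4
                                    | exists b; split; eauto 4 ]
        | right; right; right; solve [ exists m1; split; eauto 4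
                                     | exists m2; split; eauto 4
                                     | exists b; split; eauto 4 ] ].
Qed.

Lemma glue_le_L (a b : E) : L a -> L b -> (glue_le a b <-> le X a b).
Proof.
  intros la lb. split; [|intros h; left; repeat split; auto].
  intros [h|[h|[[c [h h']]|[c [h h']]]]].
  - apply h.
  - apply le_within_YX; auto.
  - apply (le_within_trans X L sysX _ c); auto. apply le_within_YX; auto; apply h.
  - apply (le_within_trans X L sysX _ c); auto. apply le_within_YX; auto; apply h'.
Qed.

Lemma glue_le_N (a b : E) : N a -> N b -> (glue_le a b <-> le Y a b).
Proof.
  intros na nb. split; [|intros h; right; left; repeat split; auto].
  intros [h|[h|[[c [h h']]|[c [h h']]]]].
  - apply le_within_XY; auto.
  - apply h.
  - apply (le_within_trans Y N sysY _ c); auto. apply le_within_XY; auto; apply h'.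
  - apply (le_within_trans Y N sysY _ c); auto. apply le_within_XY; auto; apply h.
Qed.

(* Two glued comparisons between a point only in [L] and a point only in [N]
   pass through overlap points [c <= d] (in [X]) and [d <= c] (in [Y]), which
   coincide; then [a] coincides with them, contradicting [~ N a]. *)
Lemma glue_le_not_cyclic (a b : E) :
  L a -> ~ N a -> N b -> ~ L b -> glue_le a b -> glue_le b a -> False.
Proof.
  destruct sysX as [_ [_ [antiX [transX _]]]].
  intros la na nb lb H1 H2.
  destruct H1 as [[_ [_ ?]]|[[_ [? _]]|[[c [hac hcb]]|[c [[_ [? _]] _]]]]]; try tauto.
  destruct H2 as [[_ [? _]]|[[_ [_ ?]]|[[d [[_ [? _]] _]]|[d [hbd hda]]]]]; try tauto.
  assert (hcd : le_within X L c d).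
  { apply le_within_YX; [|apply hac|apply hda].
    apply (le_within_trans Y N sysY _ b); auto. }
  assert (c = d) by (apply antiX; [apply hcd|apply (transX _ a); [apply hda|apply hac]]).
  subst d. assert (a = c) by (apply antiX; [apply hac|apply hda]).
  subst c. apply na, hcb.
Qed.

Lemma glue_le_antisym (a b : E) : glue_le a b -> glue_le b a -> a = b.
Proof.
  destruct sysX as [_ [_ [antiX _]]]. destruct sysY as [_ [_ [antiY _]]].
  intros hab hba.
  destruct (classic (L a /\ L b)) as [[la lb]|hL].
  { apply antiX; apply glue_le_L; auto. }
  destruct (classic (N a /\ N b)) as [[na nb]|hN].
  { apply antiY; apply glue_le_N; auto. }
  exfalso. destruct (L_or_N a), (L_or_N b), (classic (L a)), (classic (L b)),
    (classic (N a)), (classic (N b)); try tauto.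
  - exact (glue_le_not_cyclic a b ltac:(auto) ltac:(auto) ltac:(auto) ltac:(auto) hab hba).
  - exact (glue_le_not_cyclic b a ltac:(auto) ltac:(auto) ltac:(auto) ltac:(auto) hba hab).
Qed.

Lemma glue_preds_finite (y : E) : exists ly, forall x, glue_le x y -> In x ly.
Proof.
  destruct (system_preds_finite X sysX y) as [lX hX].
  destruct (system_preds_finite Y sysY y) as [lY hY].
  destruct (finite_preds_list (le X) lY (system_preds_finite X sysX)) as [lXY hXY].
  destruct (finite_preds_list (le Y) lX (system_preds_finite Y sysY)) as [lYX hYX].
  exists (lX ++ lY ++ lXY ++ lYX). intros x hxy. rewrite !in_app_iff.
  destruct hxy as [h|[h|[[c [h h']]|[c [h h']]]]].
  - left; apply hX, h.
  - right; left; apply hY, h.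
  - right; right; left. apply (hXY c); [apply hY, h'|apply h].
  - right; right; right. apply (hYX c); [apply hX, h'|apply h].
Qed.

Lemma is_system_glue : is_system glue.
Proof.
  destruct sysX as [evX [reflX _]]. destruct sysY as [evY [reflY _]].
  split; [|split; [|split; [|split]]]; simpl.
  - intros a b [h|[h|[[c [h h']]|[c [h h']]]]];
      destruct h as [h [? ?]]; try destruct h' as [h' [? ?]];
      [destruct (evX _ _ h)|destruct (evY _ _ h)
      |destruct (evX _ _ h), (evY _ _ h')|destruct (evY _ _ h), (evX _ _ h')]; tauto.
  - intros x [[h l]|[h n]]; [left|right; left]; repeat split; auto.
  - exact glue_le_antisym.
  - exact glue_le_trans.
  - intros y _. exact (glue_preds_finite y).
Qed.

Lemma glue_ev_L (e : E) : L e -> (ev glue e <-> ev X e).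
Proof. simpl. intros le. split; [intros [[? ?]|[? ?]]; auto; apply ev_agree; auto|auto]. Qed.

Lemma glue_ev_N (e : E) : N e -> (ev glue e <-> ev Y e).
Proof. simpl. intros ne. split; [intros [[? ?]|[? ?]]; auto; apply ev_agree; auto|auto]. Qed.
End GlueOrders.

Section Channels.
Context {Loc Chan Data : Type} (L0 : Loc -> Prop).

Definition touches (F : frame Loc Chan Data) (c : Chan) : Prop :=
  endpoint_in L0 (sender F c) \/ endpoint_in L0 (recipient F c).

Definition internal (F : frame Loc Chan Data) (c : Chan) : Prop :=
  endpoint_in L0 (sender F c) /\ endpoint_in L0 (recipient F c).

Lemma shared_sym (F G : frame Loc Chan Data) : shared L0 F G -> shared L0 G F.
Proof.
  intros [hLO hends]. split.
  - intros l hl; destruct (hLO l hl); auto.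
  - intros l hl; destruct (hends l hl) as [hs [hr ht]].
    split; [|split]; [intros c; rewrite hs|intros c; rewrite hr|]; auto; tauto.
Qed.

Lemma shared_endpoint_in (F G : frame Loc Chan Data) (c : Chan) : shared L0 F G ->
  (endpoint_in L0 (sender F c) <-> endpoint_in L0 (sender G c)) /\
  (endpoint_in L0 (recipient F c) <-> endpoint_in L0 (recipient G c)).
Proof.
  intros [_ hends]. unfold endpoint_in.
  split; split; intros [l [e hl]]; exists l; split; auto; apply (hends l hl); auto.
Qed.

Lemma shared_touches (F G : frame Loc Chan Data) (c : Chan) :
  shared L0 F G -> (touches F c <-> touches G c).
Proof. intros h. destruct (shared_endpoint_in F G c h). unfold touches; tauto. Qed.

Lemma shared_internal (F G : frame Loc Chan Data) (c : Chan) :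
  shared L0 F G -> (internal F c <-> internal G c).
Proof. intros h. destruct (shared_endpoint_in F G c h). unfold internal; tauto. Qed.

Lemma Ccut_touches (F : frame Loc Chan Data) (c : Chan) : Ccut L0 F c -> touches F c.
Proof. intros [_ [_ [[h _]|[_ h]]]]; [left|right]; exact h. Qed.

Lemma touches_not_internal_Ccut (F : frame Loc Chan Data) (c : Chan) :
  wf_frame F -> touches F c -> ~ internal F c -> Ccut L0 F c.
Proof.
  intros [hnone [hs [hr _]]] hc hint. unfold Ccut.
  unfold touches, internal in *.
  destruct (sender F c) as [s|] eqn:es, (recipient F c) as [r|] eqn:er.
  - split; [apply (hs c s es)|]. split; [eauto|tauto].
  - apply hnone in er; congruence.
  - apply hnone in es; congruence.
  - destruct hc as [[l [h _]]|[l [h _]]]; discriminate.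
Qed.

Lemma touches_CH (F : frame Loc Chan Data) (c : Chan) :
  wf_frame F -> touches F c -> CH F c.
Proof.
  intros [_ [hs [hr _]]] [[l [h _]]|[l [h _]]]; [apply (hs c l h)|apply (hr c l h)].
Qed.

Lemma chans_touches (F : frame Loc Chan Data) (l : Loc) (c : Chan) :
  L0 l -> chans F l c -> touches F c.
Proof. intros hl [h|h]; [left|right]; exists l; auto. Qed.

Lemma chans_not_internal (F : frame Loc Chan Data) (l : Loc) (c : Chan) :
  ~ L0 l -> chans F l c -> ~ internal F c.
Proof.
  intros hl hc [[s [es hs]] [r [er hr]]].
  destruct hc as [h|h]; congruence.
Qed.

Lemma LEFT_touches (F : frame Loc Chan Data) (c : Chan) : LEFT L0 F c -> touches F c.
Proof. intros [_ [h _]]. left. exact h. Qed.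

Lemma RIGHT_not_internal (F : frame Loc Chan Data) (c : Chan) :
  RIGHT L0 F c -> ~ internal F c.
Proof. intros [_ [h _]] [h' _]. exact (h h'). Qed.
End Channels.

Section Executions.
Context {Loc Chan Data E : Type} (chan : E -> Chan) (msg : E -> Data).

Lemma restrict_eq_iff (C : Chan -> Prop) (A B : system E) :
  restrict chan C A = restrict chan C B <->
  (forall e, C (chan e) -> (ev A e <-> ev B e)) /\
  (forall x y, C (chan x) -> C (chan y) -> (le A x y <-> le B x y)).
Proof.
  split.
  - intros h. split.
    + intros e he. enough (ev A e /\ C (chan e) <-> ev B e /\ C (chan e)) by tauto.
      change (ev (restrict chan C A) e <-> ev (restrict chan C B) e). rewrite h. reflexivity.
    + intros x y hx hy.
      enough (le A x y /\ C (chan x) /\ C (chan y) <-> le B x y /\ C (chan x) /\ C (chan y))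
        by tauto.
      change (le (restrict chan C A) x y <-> le (restrict chan C B) x y). rewrite h. reflexivity.
  - intros [hev hle]. unfold restrict. f_equal.
    + extensionality e. apply propositional_extensionality.
      split; intros [a b]; split; auto; apply hev; auto.
    + extensionality x. extensionality y. apply propositional_extensionality.
      split; intros [a [b c]]; repeat split; auto; apply hle; auto.
Qed.

Lemma loc_ok_transfer (F F' : frame Loc Chan Data) (A A' : system E) (l : Loc) :
  (forall c, chans F l c <-> chans F' l c) -> traces F l = traces F' l ->
  (forall e, chans F' l (chan e) -> (ev A e <-> ev A' e)) ->
  (forall x y, chans F' l (chan x) -> chans F' l (chan y) -> (le A x y <-> le A' x y)) ->
  loc_ok chan msg F A l -> loc_ok chan msg F' A' l.
Proof.
  intros hch htr hev hle. unfold loc_ok. cbv zeta.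
  intros [hlin [t [s [ht [hts [hs [hord hcov]]]]]]].
  assert (hEv : forall e, ev A' e /\ chans F' l (chan e) <-> ev A e /\ chans F l (chan e)).
  { intros e. rewrite hch. split; intros [he hc]; split; auto; apply hev; auto. }
  split.
  - intros e1 e2 h1 h2. pose proof (proj2 h1). pose proof (proj2 h2).
    apply hEv in h1, h2. destruct (hlin e1 e2 h1 h2); [left|right]; apply hle; auto.
  - exists t, s. rewrite <- htr. split; [exact ht|]. split; [exact hts|].
    split; [intros n e h; apply hEv; eauto|]. split.
    + intros i j ei ej hij hi hj. destruct (hord i j ei ej hij hi hj) as [h hne].
      split; [|exact hne]. apply hle; auto; apply hch; [apply (hs i ei hi)|apply (hs j ej hj)].
    + intros e h. apply hEv in h. auto.
Qed.

Lemma exec_glue (L0 : Loc -> Prop) (Fx Fr : frame Loc Chan Data) (wfr : wf_frame Fr)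
  (hshared : shared L0 Fx Fr) (K : Chan -> Prop)
  (hK : forall c, touches L0 Fr c -> ~ internal L0 Fr c -> K c)
  (X Y : system E) (hX : exec chan msg Fx X) (hY : exec chan msg Fr Y)
  (hXY : restrict chan K X = restrict chan K Y) :
  exists Z, exec chan msg Fr Z /\
    (forall C, subset C (touches L0 Fr) -> restrict chan C Z = restrict chan C X) /\
    (forall C, subset C (fun c => ~ internal L0 Fr c) -> restrict chan C Z = restrict chan C Y).
Proof.
  destruct hX as [sysX [chX locX]], hY as [sysY [chY locY]].
  apply restrict_eq_iff in hXY as [hev hle].
  set (Lz := fun e => touches L0 Fr (chan e)). set (Nz := fun e => ~ internal L0 Fr (chan e)).
  assert (hLN : forall e, Lz e \/ Nz e).
  { intros e. unfold Lz, Nz, touches, internal.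
    destruct (classic (endpoint_in L0 (sender Fr (chan e)))); tauto. }
  assert (ev_agree : forall e, Lz e -> Nz e -> (ev X e <-> ev Y e)) by auto.
  assert (le_agree : forall x y, Lz x -> Nz x -> Lz y -> Nz y -> (le X x y <-> le Y x y))
    by auto.
  exists (glue X Y Lz Nz). split; [|split].
  - split; [apply is_system_glue; auto|split].
    + intros e [[_ he]|[he _]]; [apply (touches_CH L0); auto|auto].
    + intros l hl. destruct (classic (L0 l)) as [h0|h0].
      * destruct hshared as [hLO hends]. destruct (hends l h0) as [hsnd [hrcv htr]].
        apply (loc_ok_transfer Fx Fr X); [|exact htr| | |apply locX, hLO, h0].
        -- intros c. unfold chans. rewrite hsnd, hrcv. reflexivity.
        -- intros e he. symmetry. apply glue_ev_L; auto. apply (chans_touches L0 Fr l); auto.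
        -- intros x y hx hy. symmetry. apply glue_le_L; auto;
             apply (chans_touches L0 Fr l); auto.
      * apply (loc_ok_transfer Fr Fr Y); [reflexivity|reflexivity| | |apply locY, hl].
        -- intros e he. symmetry. apply glue_ev_N; auto. apply (chans_not_internal L0 Fr l); auto.
        -- intros x y hx hy. symmetry. apply glue_le_N; auto;
             apply (chans_not_internal L0 Fr l); auto.
  - intros C hC. apply restrict_eq_iff. split.
    + intros e he. apply glue_ev_L; auto. apply hC, he.
    + intros x y hx hy. apply glue_le_L; auto; apply hC; auto.
  - intros C hC. apply restrict_eq_iff. split.
    + intros e he. apply glue_ev_N; auto. apply hC, he.
    + intros x y hx hy. apply glue_le_N; auto; apply hC; auto.
Qed.
End Executions.

Lemma blurred_bigunion {E I : Type} (f : (system E -> Prop) -> (system E -> Prop))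
  (S : I -> system E -> Prop) :
  blur_operator f -> (forall a, blurred f (S a)) -> blurred f (bigunion S).
Proof.
  intros hf hS. split; [exact hf|]. destruct hf as [_ [_ hunion]].
  rewrite hunion. f_equal. extensionality a. apply hS.
Qed.

Lemma J_cut_decomposition {Loc Chan Data E : Type} (chan : E -> Chan) (msg : E -> Data)
  (F1 F2 : frame Loc Chan Data) (wf1 : wf_frame F1) (wf2 : wf_frame F2)
  (L0 : Loc -> Prop) (hL0 : shared L0 F1 F2)
  (hruns : subset (lruns chan msg (Ccut L0 F1) F2) (lruns chan msg (Ccut L0 F1) F1))
  (Cs Co : Chan -> Prop) (hCs : subset Cs (LEFT L0 F1)) (hCo : subset Co (RIGHT L0 F2))
  (B : system E) :
  J chan msg F2 Co Cs B =
  bigunion (fun a : {A | exec chan msg F2 A /\ restrict chan Co A = B} =>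
              J chan msg F1 (Ccut L0 F1) Cs (restrict chan (Ccut L0 F1) (proj1_sig a))).
Proof.
  extensionality V. apply propositional_extensionality. split.
  - intros [A [hA [hAB hAV]]]. exists (exist _ A (conj hA hAB)). simpl.
    destruct (hruns (restrict chan (Ccut L0 F1) A) (ex_intro _ A (conj hA eq_refl)))
      as [A' [hA' hA'A]].
    destruct (exec_glue chan msg L0 F2 F1 wf1 (shared_sym L0 F1 F2 hL0) (Ccut L0 F1)
                (fun c => touches_not_internal_Ccut L0 F1 c wf1) A A' hA hA' (eq_sym hA'A))
      as [Z [hZ [hZA _]]].
    exists Z. split; [exact hZ|split].
    + apply hZA. intros c. apply Ccut_touches.
    + rewrite hZA; [exact hAV|]. intros c hc. apply LEFT_touches, hCs, hc.
  - intros [[A [hA hAB]] [A' [hA' [hA'A hA'V]]]]. simpl in hA'A.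
    assert (hcut : forall c, touches L0 F2 c -> ~ internal L0 F2 c -> Ccut L0 F1 c).
    { intros c ht hi. apply touches_not_internal_Ccut; [exact wf1| |].
      - apply (shared_touches L0 F1 F2); auto.
      - rewrite (shared_internal L0 F1 F2 c hL0). exact hi. }
    destruct (exec_glue chan msg L0 F1 F2 wf2 hL0 (Ccut L0 F1) hcut A' A hA' hA hA'A)
      as [Z [hZ [hZA' hZA]]].
    exists Z. split; [exact hZ|split].
    + rewrite hZA; [exact hAB|]. intros c hc. apply RIGHT_not_internal, hCo, hc.
    + rewrite hZA'; [exact hA'V|]. intros c hc.
      apply (shared_touches L0 F1 F2); auto. apply LEFT_touches, hCs, hc.
Qed.

Theorem theorem3 (Loc Chan Data E : Type) (chan : E -> Chan) (msg : E -> Data)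
  (F1 F2 : frame Loc Chan Data)
  (wf1 : wf_frame F1) (wf2 : wf_frame F2)
  (L0 : Loc -> Prop) (hL0 : shared L0 F1 F2)
  (hruns : subset (lruns chan msg (Ccut L0 F1) F2) (lruns chan msg (Ccut L0 F1) F1))
  (Cs Co : Chan -> Prop)
  (hCs : subset Cs (LEFT L0 F1)) (hCo : subset Co (RIGHT L0 F2))
  (f : (system E -> Prop) -> (system E -> Prop)) :
  limits chan msg F1 f Cs (Ccut L0 F1) -> limits chan msg F2 f Cs Co.
Proof.
  intros [hf hlim]. split; [exact hf|]. intros B _.
  rewrite (J_cut_decomposition chan msg F1 F2 wf1 wf2 L0 hL0 hruns Cs Co hCs hCo B).
  apply blurred_bigunion; [exact hf|]. intros [A [hA hAB]]. simpl.
  apply hlim, hruns. exists A. split; [exact hA|reflexivity].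
Qed.
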